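(* Let $G$ be a graph with $V(G)=[n]$, without isolated vertices, and let $I=[n]\setminus[n-i]$ be an independent set of $G$ (for some $i\ge 0$); write $\overline{S}=[n]\setminus S$. Order the facets of $\mathcal{NC}(G)$ by $\prec$ as defined in the context. If $\sigma,\sigma'\in\mathcal{NC}(G)$ satisfy $\overline{\sigma}\cap\overline{I}=\overline{\sigma'}\cap\overline{I}$ and the induced subgraph $G[\overline{\sigma}\cap\overline{I}]$ contains an edge, then $\mathrm{mes}_{\prec}(\sigma)=\mathrm{mes}_{\prec}(\sigma')$.
   Context: $\mathcal{NC}(G)$ is the simplicial complex on $V(G)$ whose faces are the sets $W\subseteq V(G)$ such that $V(G)\setminus W$ contains both endpoints of some edge. Its facets are exactly the sets $[n]\setminus\{a,b\}$ for edges $ab\in E(G)$. For edges $a_1b_1,a_2b_2$ with $a_j<b_j$, write $a_1b_1<_L a_2b_2$ if $b_1<b_2$, or $b_1=b_2$ and $a_1<a_2$. For distinct facets $\sigma,\tau$, set $\sigma\prec\tau$ iff $\overline{\sigma}<_L\overline{\tau}$; this gives a linear order $\sigma_1,\dots,\sigma_m$ of the facets. Minimal exclusion sequence: for a face $\sigma$, let $i$ be the smallest index with $\sigma\subseteq\sigma_i$. If $i=1$, $\mathrm{mes}_\prec(\sigma)$ is the empty sequence; otherwise $\mathrm{mes}_\prec(\sigma)=(v_1,\dots,v_{i-1})$ where $v_1=\min(\sigma\setminus\sigma_1)$ and for $2\le k\le i-1$, $v_k=\min(\{v_1,\dots,v_{k-1}\}\cap(\sigma\setminus\sigma_k))$ if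 this intersection is nonempty, and $v_k=\min(\sigma\setminus\sigma_k)$ otherwise (minima taken in the natural order of $[n]$). *)

(* Vertices [n] = {1..n} are modelled by 'I_n = {0..n-1}
   (vertex v+1 of the paper is the ordinal v); the natural order is preserved. *)
From mathcomp Require Import all_boot.
Set Implicit Arguments. Unset Strict Implicit. Unset Printing Implicit Defensive.

Section NC.
Variable n : nat.
Variable e : rel 'I_n.  (* simple graph: symmetric irreflexive relation *)

(* W is a face of NC(G): the complement of W contains both ends of an edge *)
Definition is_face (W : {set 'I_n}) : Prop :=
  exists a b, [/\ a \notin W, b \notin W & e a b].

(* the order <_L on edges ab (a < b), written non-strictly *)
Definition leL (p q : 'I_n * 'I_n) : bool :=
  (p.2 < q.2) || ((p.2 == q.2) && (p.1 <= q.1)).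

Definition edges_L : seq ('I_n * 'I_n) :=
  sort leL [seq p : 'I_n * 'I_n <- enum [set: ('I_n * 'I_n)%type] | (p.1 < p.2) && e p.1 p.2].

Definition facet_of (p : 'I_n * 'I_n) : {set 'I_n} := [set: 'I_n] :\ p.1 :\ p.2.

(* facets sigma_1, sigma_2, ... in the order prec *)
Definition facets : seq {set 'I_n} := map facet_of edges_L.

Definition vmin (A : {set 'I_n}) : option 'I_n :=
  [pick x in A | [forall y in A, x <= y]].

Definition mes_step (s : {set 'I_n}) (vs : seq 'I_n) (tau : {set 'I_n})
  : seq 'I_n :=
  let D := s :\: tau in
  let C := [set x in D | x \in vs] in
  let m := if C != set0 then vmin C else vmin D in
  match m with Some x => rcons vs x | None => vs end.

(* mes(sigma): with i the (1-based) index of the first facet containing sigma,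
   the sequence (v_1, ..., v_{i-1}) computed from sigma_1, ..., sigma_{i-1}. *)
Definition mes (s : {set 'I_n}) : seq 'I_n :=
  let i0 := find (fun t : {set 'I_n} => s \subset t) facets in   (* = i - 1 *)
  foldl (mes_step s) [::] (take i0 facets).

End NC.

From mathcomp Require Import all_boot.

(* Let A = [n] \ I be the vertices below n - i.  The faces s and s' agree on A,
   and A contains an edge q avoided by both faces.

   1. mes s depends only on the sets s \ t for the facets t up to the first one
      containing s: these sets decide both the stopping index and every step of
      the exclusion sequence (mes_eq_of_prefix).  Hence it suffices to find a
      prefix of the facet list containing a facet above s on which
      s \ t = s' \ t for all facets t.
   2. For the facet t = [n] \ {a,b} one has s \ t = s ∩ {a,b}, so s \ t = s' \ t
      as soon as the edge ab lies inside A (setD_facet_of).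
   3. Edges are listed increasingly for <_L, so every edge up to q has its larger
      endpoint at most that of q, hence lies in A; and the facet of q contains s
      because q avoids s.  This prefix fulfils the hypotheses of step 1. *)

Set Implicit Arguments. Unset Strict Implicit. Unset Printing Implicit Defensive.

Lemma find_prefix (T : Type) (P : pred T) (ts : seq T) (j : nat) :
  has P (take j ts) -> find P ts = find P (take j ts).
Proof. by move=> hP; rewrite -{1}(cat_take_drop j ts) find_cat hP. Qed.

Section ExclusionSequence.
Variable n : nat.
Implicit Types (s t : {set 'I_n}) (ts : seq {set 'I_n}).

Lemma mes_step_congr s s' vs tau :
  s :\: tau = s' :\: tau -> mes_step s vs tau = mes_step s' vs tau.
Proof. by rewrite /mes_step => ->. Qed.

Lemma foldl_mes_step_congr s s' ts vs :
  {in ts, forall t, s :\: t = s' :\: t} ->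
  foldl (mes_step s) vs ts = foldl (mes_step s') vs ts.
Proof.
elim: ts vs => //= t ts IH vs hts.
rewrite (mes_step_congr vs (hts t (mem_head t ts))).
by apply: IH => x hx; apply: hts; rewrite inE hx orbT.
Qed.

Lemma exclusion_seq_congr s s' ts j :
  {in take j ts, forall t, s :\: t = s' :\: t} ->
  has (fun t => s \subset t) (take j ts) ->
  foldl (mes_step s) [::] (take (find (fun t => s \subset t) ts) ts) =
  foldl (mes_step s') [::] (take (find (fun t => s' \subset t) ts) ts).
Proof.
move=> hagree hhas.
have hsub : {in take j ts, (fun t => s \subset t) =1 (fun t => s' \subset t)}.
  by move=> t /hagree ht; rewrite /= -!setD_eq0 ht.
have hhas' : has (fun t => s' \subset t) (take j ts) by rewrite -(eq_in_has hsub).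
have hfind : find (fun t => s \subset t) ts = find (fun t => s' \subset t) ts.
  by rewrite (find_prefix hhas) (find_prefix hhas') (eq_in_find hsub).
rewrite -hfind -(take_takel _ (ltnW (find_ltn hhas))).
by apply: foldl_mes_step_congr => t /mem_take /hagree.
Qed.

Variable e : rel 'I_n.

Lemma mes_eq_of_prefix s s' j :
  {in take j (facets e), forall t, s :\: t = s' :\: t} ->
  has (fun t => s \subset t) (take j (facets e)) ->
  mes e s = mes e s'.
Proof. exact: exclusion_seq_congr. Qed.

End ExclusionSequence.

Section Facets.
Variable n : nat.
Implicit Types (s : {set 'I_n}) (p q : 'I_n * 'I_n).

Lemma setD_facet_of s p : s :\: facet_of p = s :&: [set p.1; p.2].
Proof. by apply/setP => x; rewrite !inE andbT andbC negb_and !negbK orbC. Qed.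

Lemma subset_facet_of s p :
  (s \subset facet_of p) = (p.1 \notin s) && (p.2 \notin s).
Proof.
rewrite -setD_eq0 setD_facet_of setI_eq0 disjoint_sym disjoints_subset.
by rewrite subUset !sub1set !inE.
Qed.

Lemma setD_facet_congr s s' k p :
  (forall x : 'I_n, x < k -> (x \in s) = (x \in s')) ->
  p.1 < k -> p.2 < k -> s :\: facet_of p = s' :\: facet_of p.
Proof.
move=> hagree h1 h2; rewrite !setD_facet_of; apply/setP => x.
by rewrite !inE; case/orP: (orbN ((x == p.1) || (x == p.2))) =>
  [/orP[]/eqP ->|/negbTE ->]; rewrite ?andbF ?hagree ?eqxx ?orbT.
Qed.

Lemma leL_refl : reflexive (@leL n).
Proof. by move=> p; rewrite /leL eqxx leqnn orbT. Qed.

Lemma leL_trans : transitive (@leL n).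
Proof.
move=> q p r; rewrite /leL => /orP[h1|/andP[/eqP h1 h2]] /orP[h3|/andP[/eqP h3 h4]].
- by rewrite (ltn_trans h1 h3).
- by rewrite -h3 h1.
- by rewrite h1 h3.
- by rewrite h1 h3 eqxx (leq_trans h2 h4) orbT.
Qed.

Lemma leL_total : total (@leL n).
Proof.
move=> p q; rewrite /leL.
case: (ltngtP p.2 q.2) => h; rewrite ?h ?orbT //= ?eqxx /=; try exact: leq_total.
by rewrite (val_inj h) eqxx /= leq_total.
Qed.

Lemma leL_snd p q : leL p q -> p.2 <= q.2.
Proof. by case/orP=> [/ltnW|/andP[/eqP -> _]]. Qed.

Variable e : rel 'I_n.

Lemma mem_edges_L p : (p \in edges_L e) = (p.1 < p.2) && e p.1 p.2.
Proof. by rewrite /edges_L mem_sort mem_filter mem_enum inE andbT. Qed.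

Lemma edges_L_before p q : q \in edges_L e ->
  p \in take (index q (edges_L e)).+1 (edges_L e) -> p.2 <= q.2.
Proof.
move=> hq hp; apply: leL_snd.
have srt : sorted (@leL n) (edges_L e) by exact: (sort_sorted leL_total).
apply: (sorted_leq_index leL_trans leL_refl srt p q (mem_take hp) hq).
by rewrite -ltnS (index_ltn hp).
Qed.

Lemma edge_listed (P : pred 'I_n) u v :
  symmetric e -> irreflexive e -> e u v -> P u -> P v ->
  exists2 q, q \in edges_L e & P q.1 && P q.2.
Proof.
move=> e_sym e_irr huv Pu Pv.
case: (ltngtP u v) => [lt_uv|lt_vu|/val_inj eq_uv].
- by exists (u, v); [rewrite mem_edges_L lt_uv huv | rewrite /= Pu Pv].
- by exists (v, u); [rewrite mem_edges_L lt_vu e_sym huv | rewrite /= Pu Pv].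
- by move: huv; rewrite eq_uv e_irr.
Qed.

End Facets.

Theorem claim2p2 (n : nat) (e : rel 'I_n)
  (e_sym : symmetric e) (e_irr : irreflexive e)
  (no_isolated : forall v : 'I_n, exists u, e v u)
  (i : nat)
  (I_indep : forall u v : 'I_n, n - i <= u -> n - i <= v -> ~~ e u v)
  (s s' : {set 'I_n})
  (hs : is_face e s) (hs' : is_face e s')
  (heq : ~: s :&: ~: [set v : 'I_n | n - i <= v]
         = ~: s' :&: ~: [set v : 'I_n | n - i <= v])
  (hedge : exists u v : 'I_n,
     [/\ u \in ~: s :&: ~: [set w : 'I_n | n - i <= w],
         v \in ~: s :&: ~: [set w : 'I_n | n - i <= w] & e u v]) :
  mes e s = mes e s'.
Proof.
have hagree (x : 'I_n) : x < n - i -> (x \in s) = (x \in s').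
  move=> hx; have := congr1 (fun A : {set 'I_n} => x \in A) heq.
  by rewrite !inE leqNgt hx !andbT => /negb_inj.
have [q hq /andP[/andP[q1 q1s] /andP[q2 q2s]]] :
    exists2 q, q \in edges_L e &
      [pred x : 'I_n | (x < n - i) && (x \notin s)] q.1 &&
      [pred x : 'I_n | (x < n - i) && (x \notin s)] q.2.
  case: hedge => u [v [hu hv huv]]; move: hu hv; rewrite !inE -!ltnNge.
  by rewrite ![(_ \notin s) && _]andbC; apply: edge_listed.
apply: (@mes_eq_of_prefix _ _ _ _ (index q (edges_L e)).+1).
- move=> t; rewrite /facets -map_take => /mapP[p hp ->].
  have p2 : p.2 < n - i := leq_ltn_trans (edges_L_before hq hp) q2.
  have p1 : p.1 < p.2 by move: (mem_take hp); rewrite mem_edges_L => /andP[].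
  exact: setD_facet_congr hagree (ltn_trans p1 p2) p2.
- apply/hasP; exists (facet_of q); last by rewrite subset_facet_of q1s q2s.
  by rewrite /facets -map_take map_f // in_take // ltnSn.
Qed.
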